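(* Assume the standing hypotheses and definitions in the context. For any $(t_0,y_0)\in\mathbb{R}\times\mathbb{R}^n$, the function $t\mapsto G(t,Y(t,t_0,y_0))$ is a solution of the system $x'=A(t)x+f(t,x)$.
   Context: Standing hypotheses: $A:\mathbb{R}\to\mathbb{R}^{n\times n}$ is continuous and bounded, $T(t,s)$ is the evolution operator of $x'=A(t)x$. $\mu:\mathbb{R}\to(0,\infty)$ is an increasing differentiable growth rate: $\mu(0)=1$, $\lim_{t\to-\infty}\mu(t)=0$, $\lim_{t\to+\infty}\mu(t)=+\infty$. The system $x'=A(t)x$ admits an algebraic dichotomy: projections $P(s)$, $Q(s)=I-P(s)$, constants $K,\alpha>0$ with $T(t,s)P(s)=P(t)T(t,s)$, $\|T(t,s)P(s)\|\le K(\mu(t)/\mu(s))^{-\alpha}$ ($t\ge s$), $\|T(t,s)Q(s)\|\le K(\mu(s)/\mu(t))^{-\alpha}$ ($t\le s$). $f:\mathbb{R}\times\mathbb{R}^n\to\mathbb{R}^n$ is continuous, $\|f(t,x)\|\le\beta\mu'(t)\mu^{-1}(t)$, $\|f(t,x_1)-f(t,x_2)\|\le\gamma\mu'(t)\mu^{-1}(t)\|x_1-x_2\|$ for constants $\beta,\gamma\ge0$, and $6K\gamma\alpha^{-1}<1$. $Y(t,\tau,\xi)$ is the solution of $x'=A(t)x$ with $Y(\tau)=\xi$. For each $(\tau,\xi)$, $g(t,(\tau,\xi))$ denotes the unique solution bounded on $\mathbb{R}$ of $Z'=A(t)Z+f(t,Y(t,\tau,\xi)+Z)$ (it exists and is unique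 under these hypotheses). Define $G(t,y)=y+g(t,(t,y))$. *)

(* R : realType, vectors are column vectors 'cV[R]_n
   with the (library) sup norm, matrices 'M[R]_n. *)
From HB Require Import structures.
From mathcomp Require Import all_boot all_order all_algebra.
From mathcomp Require Import all_classical all_reals all_analysis.
Set Implicit Arguments. Unset Strict Implicit. Unset Printing Implicit Defensive.
Import Order.TTheory GRing.Theory Num.Theory.
Import numFieldNormedType.Exports.
Local Open Scope ring_scope.

Definition is_solution {R : realType} {n : nat}
  (F : R -> 'cV[R]_n -> 'cV[R]_n) (x : R -> 'cV[R]_n) : Prop :=
  forall t : R, is_derive t (1 : R) x (F t (x t)).

Definition bounded_on_R {R : realType} {n : nat} (x : R -> 'cV[R]_n) : Prop :=
  exists M : R, forall t : R, `|x t| <= M.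

Definition bounded_sol {R : realType} {n : nat}
  (A : R -> 'M[R]_n) (f : R -> 'cV[R]_n -> 'cV[R]_n)
  (Y : R -> R -> 'cV[R]_n -> 'cV[R]_n) (tau : R) (xi : 'cV[R]_n)
  (Z : R -> 'cV[R]_n) : Prop :=
  bounded_on_R Z /\
  is_solution (fun t z => A t *m z + f t (Y t tau xi + z)) Z.

(** Uniqueness for the linear system [x' = A(t) x] (an energy estimate on
    [sum_i x_i^2] with an exponential weight, since [A] is bounded) gives the
    cocycle identity [Y(s, t, Y(t, t0, y0)) = Y(s, t0, y0)].  Hence the problems
    defining [g(., (t, Y(t, t0, y0)))] and [g(., (t0, y0))] coincide, and by
    uniqueness of bounded solutions [G(t, Y(t, t0, y0)) = Y(t, t0, y0) + g(t, t0, y0)],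
    the sum of a solution of [x' = A x] and of [z' = A z + f(t, Y + z)]. *)

From HB Require Import structures.
From mathcomp Require Import all_boot all_order all_algebra.
From mathcomp Require Import all_classical all_reals all_analysis.
From mathcomp Require Import ring lra.

Set Implicit Arguments.
Unset Strict Implicit.
Unset Printing Implicit Defensive.

Import Order.TTheory GRing.Theory Num.Theory.
Import numFieldNormedType.Exports.
Local Open Scope ring_scope.
Local Open Scope classical_set_scope.

Section LinearUniqueness.
Variable R : realType.

Lemma ler_norm_2mul_sqrD (a b c M : R) :
  `|b| <= M -> `|2 * a * b * c| <= M * (a ^+ 2 + c ^+ 2).
Proof.
move=> hb; rewrite mulrAC normrM mulrC.
apply: ler_pM => //.
have := sqr_ge0 (a - c); have := sqr_ge0 (a + c); rewrite !expr2 => ? ?.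
by rewrite ler_norml; apply/andP; split; nra.
Qed.

Lemma ler_norm_mx_entry m n (B : 'M[R]_(m, n)) i j : `|B i j| <= `|B|.
Proof. by rewrite [leRHS]mx_normrE; apply: le_bigmax (i, j). Qed.

Definition sqnorm n (v : 'cV[R]_n) : R := \sum_i v i 0 ^+ 2.

Lemma sqnorm_ge0 n (v : 'cV[R]_n) : 0 <= sqnorm v.
Proof. by apply: sumr_ge0 => i _; rewrite sqr_ge0. Qed.

Lemma sqnorm0 n : sqnorm (0 : 'cV[R]_n) = 0.
Proof. by apply: big1 => i _; rewrite mxE expr0n. Qed.

Lemma sqnorm_eq0 n (v : 'cV[R]_n) : sqnorm v = 0 -> v = 0.
Proof.
move/psumr_eq0P => v0; apply/matrixP => i j; rewrite (ord1 j) mxE.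
by apply/eqP; rewrite -sqrf_eq0 v0 // => k _; rewrite sqr_ge0.
Qed.

Lemma ler_norm_mulmx_dot n (B : 'M[R]_n) (v : 'cV[R]_n) (M : R) : `|B| <= M ->
  `|\sum_i 2 * v i 0 * (B *m v) i 0| <= 2 * M * n%:R * sqnorm v.
Proof.
move=> hB; apply: le_trans (ler_norm_sum _ _ _) _.
apply: (@le_trans _ _ (\sum_i \sum_j M * (v i 0 ^+ 2 + v j 0 ^+ 2))).
  apply: ler_sum => i _; rewrite mxE mulr_sumr.
  apply: le_trans (ler_norm_sum _ _ _) _.
  apply: ler_sum => j _; rewrite mulrA; apply: ler_norm_2mul_sqrD.
  exact: le_trans (ler_norm_mx_entry _ _ _) hB.
rewrite /sqnorm.
under eq_bigr do rewrite -mulr_sumr big_split /= sumr_const card_ord.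
rewrite -mulr_sumr big_split /= sumr_const card_ord sumrMnl -/(sqnorm v).
by rewrite -mulr_natr le_eqVlt; apply/orP; left; apply/eqP; ring.
Qed.

Lemma is_derive_mx_entry m n (x : R -> 'M[R]_(m, n)) t (dx : 'M[R]_(m, n)) i j :
  is_derive t (1 : R) x dx -> is_derive t (1 : R) (fun s => x s i j) (dx i j).
Proof.
move=> [xt <-]; have xtij : derivable (fun s => x s i j) t 1.
  by move/derivable_mxP : xt; apply.
by apply: DeriveDef => //; rewrite derive_mx // mxE.
Qed.

Lemma is_derive_sqnorm n (x : R -> 'cV[R]_n) t (dx : 'cV[R]_n) :
  is_derive t (1 : R) x dx ->
  is_derive t (1 : R) (fun s => sqnorm (x s)) (\sum_i 2 * x t i 0 * dx i 0).
Proof.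
move=> xt.
have -> : (fun s => sqnorm (x s)) = \sum_i (fun s => x s i 0) ^+ 2.
  by rewrite fct_sumE; apply/funext => s; apply: eq_bigr => i _; rewrite exprfctE.
have := is_derive_sum (fun i => is_deriveX 2 (is_derive_mx_entry i 0 xt)).
move=> H; apply: is_derive_eq; apply: eq_bigr => i _.
by rewrite /GRing.scale /= expr1.
Qed.

Lemma is_derive_mul_expR (h : R -> R) (a t dh : R) : is_derive t (1 : R) h dh ->
  is_derive t (1 : R) (fun s => h s * expR (a * s)) ((dh + a * h t) * expR (a * t)).
Proof.
move=> ht.
have lin : is_derive t (1 : R) ( *%R a) a.
  by apply: is_derive_eq; rewrite /GRing.scale /= mulr1.
have := is_deriveM ht (is_derive1_comp (is_derive_expR (a * t)) lin).
by move=> H; apply: is_derive_eq; rewrite /GRing.scale /=; ring.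
Qed.

Lemma gronwall_eq0 (h dh : R -> R) (c t0 : R) :
  (forall t, is_derive t (1 : R) h (dh t)) -> (forall t, 0 <= h t) ->
  (forall t, `|dh t| <= c * h t) -> h t0 = 0 -> forall t, h t = 0.
Proof.
move=> hd h_ge0 dh_le ht0 t; apply/eqP; rewrite eq_le h_ge0 andbT.
pose k a s := h s * expR (a * s).
have kd a s := is_derive_mul_expR a (hd s).
have k_derivable a s : derivable (k a) s 1 by case: (kd a s).
have k_cont a (i : interval R) : {within [set` i], continuous (k a)}.
  by apply: derivable_within_continuous => s _; exact: k_derivable.
have kt0 a : k a t0 = 0 by rewrite /k ht0 mul0r.
suff : k (if t0 <= t then - c else c) t <= 0 by rewrite /k pmulr_lle0 ?expR_gt0.
have [t0t|tt0] := leP t0 t.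
- rewrite -(kt0 (- c)); apply: (ler0_derive1_nincr (fun s _ => k_derivable _ s) _
    (k_cont _ _) (lexx t0) t0t (lexx t)) => s _.
  rewrite derive1E (@derive_val _ _ _ _ _ _ _ (kd _ s)) mulr_le0_ge0 ?expR_ge0 //.
  by have := dh_le s; rewrite ler_norml => /andP[_]; lra.
- rewrite -(kt0 c); apply: (ger0_derive1_ndecr (fun s _ => k_derivable _ s) _
    (k_cont _ _) (lexx t) (ltW tt0) (lexx t0)) => s _.
  rewrite derive1E (@derive_val _ _ _ _ _ _ _ (kd _ s)) mulr_ge0 ?expR_ge0 //.
  by have := dh_le s; rewrite ler_norml => /andP[+ _]; lra.
Qed.

Lemma linear_solution_uniq n (A : R -> 'M[R]_n) (M : R) (x1 x2 : R -> 'cV[R]_n)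
    (t0 : R) : (forall t, `|A t| <= M) ->
  is_solution (fun t x => A t *m x) x1 -> is_solution (fun t x => A t *m x) x2 ->
  x1 t0 = x2 t0 -> forall t, x1 t = x2 t.
Proof.
move=> A_le x1_sol x2_sol x12t0 t; apply/subr0_eq.
pose d s := x1 s - x2 s.
have dd s : is_derive s (1 : R) d (A s *m d s).
  by rewrite mulmxBr; apply: is_deriveB.
apply/sqnorm_eq0/(gronwall_eq0 (t0 := t0) (fun s => is_derive_sqnorm (dd s))).
- by move=> s; exact: sqnorm_ge0.
- by move=> s; exact: ler_norm_mulmx_dot.
- by rewrite /d x12t0 subrr sqnorm0.
Qed.

Lemma linear_flow_cocycle n (A : R -> 'M[R]_n) (M : R)
    (Y : R -> R -> 'cV[R]_n -> 'cV[R]_n) : (forall t, `|A t| <= M) ->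
  (forall tau xi, Y tau tau xi = xi) ->
  (forall tau xi, is_solution (fun t x => A t *m x) (fun t => Y t tau xi)) ->
  forall t0 y0 t s, Y s t (Y t t0 y0) = Y s t0 y0.
Proof.
move=> A_le Y0 Y_sol t0 y0 t.
by apply: (linear_solution_uniq (t0 := t) A_le (Y_sol _ _) (Y_sol _ _)); rewrite Y0.
Qed.

End LinearUniqueness.

Lemma eq_bounded_sol (R : realType) n (A : R -> 'M[R]_n) f
    (Y : R -> R -> 'cV[R]_n -> 'cV[R]_n) tau xi tau' xi' (Z : R -> 'cV[R]_n) :
  (forall t, Y t tau xi = Y t tau' xi') ->
  bounded_sol A f Y tau xi Z -> bounded_sol A f Y tau' xi' Z.
Proof. by move=> eqY [Zb Z_sol]; split=> // t; rewrite -eqY; exact: Z_sol. Qed.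

Theorem lemma3p6 (R : realType) (n : nat)
  (A : R -> 'M[R]_n) (T : R -> R -> 'M[R]_n)
  (mu : R -> R) (P : R -> 'M[R]_n) (K alpha beta gamma : R)
  (f : R -> 'cV[R]_n -> 'cV[R]_n)
  (Y : R -> R -> 'cV[R]_n -> 'cV[R]_n)
  (g : R -> R -> 'cV[R]_n -> 'cV[R]_n)
  (* A continuous and bounded *)
  (hAc : continuous A)
  (hAb : exists M : R, forall t, `|A t| <= M)
  (* T is the evolution operator of x' = A(t) x *)
  (hT0 : forall s, T s s = 1%:M)
  (hTd : forall t s : R, is_derive t (1 : R) (fun u => T u s) (A t *m T t s))
  (* growth rate mu *)
  (hmu_pos : forall t, 0 < mu t)
  (hmu_inc : {homo mu : x y / x < y})
  (hmu_der : forall t : R, derivable mu t 1)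
  (hmu0 : mu 0 = 1)
  (hmu_m : mu x @[x --> -oo] --> 0)
  (hmu_p : mu x @[x --> +oo] --> +oo)
  (* algebraic dichotomy *)
  (hK : 0 < K) (halpha : 0 < alpha)
  (hP : forall s, P s *m P s = P s)
  (hPT : forall t s, T t s *m P s = P t *m T t s)
  (hPb : forall t s (x : 'cV[R]_n), s <= t ->
     `|T t s *m P s *m x| <= K * (mu t / mu s) `^ (- alpha) * `|x|)
  (hQb : forall t s (x : 'cV[R]_n), t <= s ->
     `|T t s *m (1%:M - P s) *m x| <= K * (mu s / mu t) `^ (- alpha) * `|x|)
  (* perturbation f *)
  (hfc : continuous (fun p : R * 'cV[R]_n => f p.1 p.2))
  (hbeta : 0 <= beta) (hgamma : 0 <= gamma)
  (hfb : forall t x, `|f t x| <= beta * (derive1 mu t / mu t))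
  (hfL : forall t x1 x2,
     `|f t x1 - f t x2| <= gamma * (derive1 mu t / mu t) * `|x1 - x2|)
  (hsmall : 6 * K * gamma / alpha < 1)
  (* Y(t, tau, xi): solution of x' = A(t) x with Y(tau) = xi *)
  (hY0 : forall tau xi, Y tau tau xi = xi)
  (hYd : forall tau xi, is_solution (fun t x => A t *m x) (fun t => Y t tau xi))
  (* g(t, (tau, xi)): the unique solution bounded on R of
     Z' = A(t) Z + f(t, Y(t,tau,xi) + Z) *)
  (hg : forall tau xi, bounded_sol A f Y tau xi (fun t => g t tau xi))
  (hgu : forall tau xi Z, bounded_sol A f Y tau xi Z ->
     forall t, Z t = g t tau xi) :
  let G := fun t y => y + g t t y in
  forall (t0 : R) (y0 : 'cV[R]_n),
    is_solution (fun t x => A t *m x + f t x) (fun t => G t (Y t t0 y0)).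
Proof.
move=> G t0 y0; have [M A_le] := hAb.
have Y_cocycle := linear_flow_cocycle A_le hY0 hYd t0 y0.
have g_orbit t s : g s t (Y t t0 y0) = g s t0 y0.
  apply/esym/(hgu t (Y t t0 y0) (fun s => g s t0 y0)).
  by apply: eq_bounded_sol (hg t0 y0) => u; rewrite Y_cocycle.
have -> : (fun t => G t (Y t t0 y0)) = (fun t => Y t t0 y0 + g t t0 y0).
  by apply/funext => t; rewrite /G g_orbit.
have [_ g_sol] := hg t0 y0.
by move=> t; rewrite mulmxDr -addrA; exact: is_deriveD (hYd t0 y0 t) (g_sol t).
Qed.
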